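(* Let $A$ be a metabelian Lie $U$-algebra over a field $k$, with $R=k[x_\alpha:\alpha\in\Lambda]$ as below, and let $M$ be a torsion-free $R$-module. Then every Lie algebra homomorphism $\varphi:A\oplus M\to A$ that is the identity on $A$ maps $M$ into $\mathrm{Fit}(A)$, its restriction $\varphi|_M$ is an $R$-module homomorphism $M\to\mathrm{Fit}(A)$, and $\varphi\mapsto\varphi|_M$ is a bijection between the set $\mathrm{Hom}_A(A\oplus M,A)$ of such homomorphisms and $\mathrm{Hom}_R(M,\mathrm{Fit}(A))$.
   Context: A Lie algebra is metabelian if $(a\circ b)\circ(c\circ d)=0$ identically; $\mathrm{Fit}(A)$ is the ideal generated by all elements lying in nilpotent ideals. A metabelian Lie algebra $A$ is a $U$-algebra if $\mathrm{Fit}(A)$ is abelian and torsion-free as a module over $R=k[x_\alpha:\alpha\in\Lambda]$, where $\{z_\alpha:\alpha\in\Lambda\}\subseteq A$ is a family whose images form a basis of $A/\mathrm{Fit}(A)$ and $b\cdot x_\alpha=b\circ z_\alpha$ for $b\in\mathrm{Fit}(A)$ (extended multiplicatively and linearly). Let $V$ be the $k$-span of $\{z_\alpha\}$. Direct module extension: $A\oplus M$ is the $k$-space $V\oplus\mathrm{Fit}(A)\oplus M$ with bracket: on $V\oplus\mathrm{Fit}(A)$ it is that of $A$; all products between elements of $\mathrm{Fit}(A)\oplus M$ and elements of $M$ (either order) are $0$; $m\circ z_\alpha=m\cdot x_\alpha=-z_\alpha\circ m$ for $m\in M$; extended bilinearly. It is a metabelian Lie algebra containing $A$. *)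

From HB Require Import structures.
From mathcomp Require Import all_boot all_algebra.
From mathcomp Require Import mpoly.
Set Implicit Arguments. Unset Strict Implicit. Unset Printing Implicit Defensive.
Import GRing.Theory.
Local Open Scope ring_scope.

Section LieDefs.
Variable k : fieldType.

Section Lie.
Variables (A : lmodType k) (br : A -> A -> A).

Definition is_lie_algebra : Prop :=
  [/\ (forall (c : k) a a' b, br (c *: a + a') b = c *: br a b + br a' b),
      (forall (c : k) a b b', br a (c *: b + b') = c *: br a b + br a b'),
      (forall a, br a a = 0) &
      (forall a b c, br (br a b) c + br (br b c) a + br (br c a) b = 0)].

Definition metabelian : Prop :=
  forall a b c d, br (br a b) (br c d) = 0.

Definition ideal (I : A -> Prop) : Prop :=
  [/\ I 0, (forall (c : k) a b, I a -> I b -> I (c *: a + b)) &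
      (forall a b, I a -> I (br a b))].

Definition lbr (a : A) (s : seq A) : A := foldl br a s.

(* I is a nilpotent ideal: I^(n+1) = 0 for some n, where I^(n+1) is spanned
   by the left-normed brackets of n+1 elements of I *)
Definition nilpotent_ideal (I : A -> Prop) : Prop :=
  ideal I /\ exists n : nat, forall a s, size s = n -> I a ->
      (forall b, b \in s -> I b) -> lbr a s = 0.
End Lie.

(* Fit(A): the ideal generated by all elements lying in nilpotent ideals,
   i.e. the smallest ideal containing them *)
Definition Fit (A : lmodType k) (br : A -> A -> A) (x : A) : Prop :=
  forall J : A -> Prop, ideal br J ->
    (forall I y, nilpotent_ideal br I -> I y -> J y) -> J x.

(* An R-module structure on a k-space V is given by pairwise commuting
   k-linear operators X alpha (action of x_alpha).  Every element of R is a
   polynomial in finitely many variables x_(f 0), ..., x_(f (n-1)); we let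
   q : {mpoly k[n]} act through f : 'I_n -> Lam. *)
Section Poly.
Variables (Lam : eqType) (V : lmodType k) (X : Lam -> V -> V).

Definition R_module_str : Prop :=
  (forall al (c : k) v w, X al (c *: v + w) = c *: X al v + X al w) /\
  (forall al be v, X al (X be v) = X be (X al v)).

Definition monact n (f : 'I_n -> Lam) (mo : 'X_{1..n}) (v : V) : V :=
  foldr (fun i w => iter (mo i) (X (f i)) w) v (enum 'I_n).

Definition polyact n (f : 'I_n -> Lam) (q : {mpoly k[n]}) (v : V) : V :=
  \sum_(mo <- msupp q) q@_mo *: monact f mo v.

(* torsion-free: m . p = 0 with p a nonzero element of R forces m = 0
   (f injective, so that q <> 0 means the element of R is nonzero) *)
Definition R_torsion_free : Prop :=
  forall n (f : 'I_n -> Lam), injective f ->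
    forall q : {mpoly k[n]}, q != 0 -> forall v, polyact f q v = 0 -> v = 0.
End Poly.

Definition R_hom (Lam : eqType) (V W : lmodType k)
    (XV : Lam -> V -> V) (XW : Lam -> W -> W) (psi : V -> W) : Prop :=
  (forall (c : k) v w, psi (c *: v + w) = c *: psi v + psi w) /\
  (forall n (f : 'I_n -> Lam) (q : {mpoly k[n]}) v,
      psi (polyact XV f q v) = polyact XW f q (psi v)).

Section U.
Variables (A : lmodType k) (br : A -> A -> A) (Lam : eqType) (z : Lam -> A).

(* module structure of Fit(A): b . x_alpha = b o z_alpha *)
Definition XFit (al : Lam) (b : A) : A := br b (z al).

(* the images of the z_alpha form a basis of A / Fit(A) *)
Definition basis_mod_Fit : Prop :=
  (forall a, exists (s : seq Lam) (c : Lam -> k),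
       Fit br (a - \sum_(al <- s) c al *: z al)) /\
  (forall (s : seq Lam) (c : Lam -> k), uniq s ->
       Fit br (\sum_(al <- s) c al *: z al) -> forall al, al \in s -> c al = 0).

Definition Fit_torsion_free : Prop :=
  forall n (f : 'I_n -> Lam), injective f ->
    forall q : {mpoly k[n]}, q != 0 ->
      forall b, Fit br b -> polyact XFit f q b = 0 -> b = 0.

Definition U_algebra : Prop :=
  [/\ is_lie_algebra br, metabelian br,
      (forall a b, Fit br a -> Fit br b -> br a b = 0),
      basis_mod_Fit & Fit_torsion_free].

Variables (M : lmodType k) (X : Lam -> M -> M).

(* rho a m = m o a: the action of A on M, determined (A = V (+) Fit(A)) by
   bilinearity, m o z_alpha = m . x_alpha and m o Fit(A) = 0 *)
Definition ext_action (rho : A -> M -> M) : Prop :=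
  [/\ (forall (c : k) a a' m, rho (c *: a + a') m = c *: rho a m + rho a' m),
      (forall (c : k) a m m', rho a (c *: m + m') = c *: rho a m + rho a m'),
      (forall al m, rho (z al) m = X al m) &
      (forall b m, Fit br b -> rho b m = 0)].

Definition ext_br (rho : A -> M -> M) (p q : A * M) : A * M :=
  (br p.1 q.1, rho q.1 p.2 - rho p.1 q.2).

Definition HomA (rho : A -> M -> M) (phi : A * M -> A) : Prop :=
  [/\ (forall (c : k) a a' m m',
         phi (c *: a + a', c *: m + m') = c *: phi (a, m) + phi (a', m')),
      (forall p q, phi (ext_br rho p q) = br (phi p) (phi q)) &
      (forall a, phi (a, 0) = a)].

Definition HomR_M_Fit (psi : M -> A) : Prop :=
  (forall m, Fit br (psi m)) /\ R_hom X XFit psi.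
End U.
End LieDefs.

(* A homomorphism phi : A (+) M -> A fixing A is a + m |-> a + psi m with
   psi := phi|_M, and the bracket forces psi (m o a) = [psi m, a].  Since
   m o Fit(A) = 0, psi m centralizes Fit(A), and in a U-algebra Fit(A) is
   self-centralizing: if a = sum c_al z_al modulo Fit(A) centralizes Fit(A),
   then every b in Fit(A) satisfies b . (sum c_al x_al) = [b, a] = 0, so all
   c_al vanish as soon as Fit(A) <> 0 (torsion-freeness), while Fit(A) = 0
   makes A abelian, hence A = Fit(A).  Conversely any R-linear
   psi : M -> Fit(A) yields the homomorphism (a, m) |-> a + psi m, because
   Fit(A) is abelian and psi (m o a) = [psi m, a] holds on the z_al. *)
From HB Require Import structures.
From mathcomp Require Import all_boot all_algebra.
From mathcomp Require Import mpoly.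
From Stdlib Require Import Classical.
Set Implicit Arguments. Unset Strict Implicit. Unset Printing Implicit Defensive.
Import GRing.Theory.
Local Open Scope ring_scope.

Section LinearMaps.
Variables (R : pzRingType) (U V : lmodType R) (f : U -> V).
Hypothesis f_lin : forall (c : R) u u', f (c *: u + u') = c *: f u + f u'.

Lemma lin0 : f 0 = 0.
Proof.
apply: (@addrI _ (f 0)); rewrite addr0.
by have := f_lin 1 0 0; rewrite scale1r addr0 scale1r.
Qed.

Lemma linD u u' : f (u + u') = f u + f u'.
Proof. by have := f_lin 1 u u'; rewrite !scale1r. Qed.

Lemma linZ c u : f (c *: u) = c *: f u.
Proof. by have := f_lin c u 0; rewrite !addr0 lin0 addr0. Qed.

Lemma linB u u' : f (u - u') = f u - f u'.
Proof. by rewrite linD -scaleN1r linZ scaleN1r. Qed.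

Lemma lin_sum (I : Type) (s : seq I) (F : I -> U) :
  f (\sum_(i <- s) F i) = \sum_(i <- s) f (F i).
Proof. exact: (big_morph f linD lin0). Qed.
End LinearMaps.

Lemma sum_seq_inj_ord (R : pzRingType) (V : lmodType R) (T : eqType)
    (s : seq T) (c : T -> R) (u : T -> V) :
  exists n (f : 'I_n -> T) (d : 'I_n -> R),
    injective f /\ \sum_(x <- s) c x *: u x = \sum_i d i *: u (f i).
Proof.
pose t := undup s; pose f := tnth (in_tuple t).
exists (size t), f, (fun i => c (f i) *+ count_mem (f i) s); split.
  by apply/tuple_uniqP; exact: undup_uniq.
rewrite -big_undup_iterop_count -/t (big_tnth _ _ t); apply: eq_bigr => i _.
rewrite Monoid.iteropE -scalerMnl.
by elim: (count_mem _ s) => [|n IH] //=; rewrite IH mulrS.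
Qed.

Section LieBracket.
Variables (k : fieldType) (A : lmodType k) (br : A -> A -> A).
Hypothesis hL : is_lie_algebra br.

Let br_linl b : forall (c : k) a a', br (c *: a + a') b = c *: br a b + br a' b.
Proof. by case: hL => hl _ _ _ c a a'; exact: hl. Qed.
Let br_linr a : forall (c : k) b b', br a (c *: b + b') = c *: br a b + br a b'.
Proof. by case: hL => _ hr _ _ c; exact: hr. Qed.

Lemma br0l b : br 0 b = 0. Proof. exact: (lin0 (f := fun a => br a b) (br_linl b)). Qed.
Lemma br0r a : br a 0 = 0. Proof. exact: (lin0 (f := br a) (br_linr a)). Qed.
Lemma brDl a a' b : br (a + a') b = br a b + br a' b.
Proof. exact: (linD (f := fun a => br a b) (br_linl b)). Qed.
Lemma brDr a b b' : br a (b + b') = br a b + br a b'.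
Proof. exact: (linD (f := br a) (br_linr a)). Qed.
Lemma brZl c a b : br (c *: a) b = c *: br a b.
Proof. exact: (linZ (f := fun a => br a b) (br_linl b)). Qed.
Lemma brZr c a b : br a (c *: b) = c *: br a b.
Proof. exact: (linZ (f := br a) (br_linr a)). Qed.
Lemma brBl a a' b : br (a - a') b = br a b - br a' b.
Proof. exact: (linB (f := fun a => br a b) (br_linl b)). Qed.
Lemma br_sumr (I : Type) (s : seq I) (F : I -> A) a :
  br a (\sum_(i <- s) F i) = \sum_(i <- s) br a (F i).
Proof. exact: (lin_sum (f := br a) (br_linr a)). Qed.

Lemma br_anticomm a b : br a b = - br b a.
Proof.
case: hL => _ _ hnil _; apply/eqP; rewrite -addr_eq0.
by have := hnil (a + b); rewrite brDl !brDr !hnil add0r addr0 => ->.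
Qed.

Lemma nilpotent_ideal_sub_Fit I y : nilpotent_ideal br I -> I y -> Fit br y.
Proof. by move=> hI hy J _ hJ; exact: hJ hI hy. Qed.

Lemma abelian_ideal_nilpotent I :
  ideal br I -> (forall a b, I a -> I b -> br a b = 0) -> nilpotent_ideal br I.
Proof.
move=> hI hab; split=> //; exists 1%N => a [|b [|? ?]] // _ ha hs /=.
by apply: hab ha _; apply: hs; rewrite inE.
Qed.

Lemma abelian_Fit_full :
  (forall a b, br a b = 0) -> forall a, Fit br a.
Proof.
move=> hab a; apply: (@nilpotent_ideal_sub_Fit (fun _ => True)) => //.
by apply: abelian_ideal_nilpotent => //; split.
Qed.

Definition derived (x : A) : Prop :=
  forall J, ideal br J -> (forall a b, J (br a b)) -> J x.

Lemma derived_ideal : ideal br derived.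
Proof.
split.
- by move=> J [].
- by move=> c a b ha hb J hJ hbr; case: (hJ) => _ h _; apply: h; [apply: ha | apply: hb].
- by move=> a b _ J _ hbr; exact: hbr.
Qed.

Hypothesis hM : metabelian br.

Lemma derived_abelian a b : derived a -> derived b -> br a b = 0.
Proof.
have br_bracket c d y : derived y -> br (br c d) y = 0.
  move=> hy; apply: (hy (fun y => br (br c d) y = 0)); last exact: hM.
  split=> [|c' x y' hx hy' | x y' _]; last exact: hM.
  - exact: br0r.
  - by rewrite brDr brZr hx hy' scaler0 addr0.
move=> ha; move: b; apply: (ha (fun a => forall b, derived b -> br a b = 0)).
  split=> [b _ | c x y hx hy b hb | x y _ b hb]; last exact: br_bracket.
  - exact: br0l.
  - by rewrite brDl brZl hx // hy // scaler0 addr0.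
by move=> c d b; exact: br_bracket.
Qed.

Lemma br_in_Fit a b : Fit br (br a b).
Proof.
apply: (@nilpotent_ideal_sub_Fit derived); last by move=> J _; apply.
exact: abelian_ideal_nilpotent derived_ideal derived_abelian.
Qed.

Lemma Fit_trivial_full : (forall b, Fit br b -> b = 0) -> forall a, Fit br a.
Proof. by move=> h0; apply: abelian_Fit_full => a b; exact: h0 (br_in_Fit a b). Qed.
End LieBracket.

Section PolyAction.
Variables (k : fieldType) (Lam : eqType) (V : lmodType k) (Y : Lam -> V -> V).

Lemma monact_mnm1 n (f : 'I_n -> Lam) (i : 'I_n) v :
  monact Y f U_(i)%MM v = Y (f i) v.
Proof.
suff foldr_mnm1 (r : seq 'I_n) : uniq r ->
    foldr (fun j w => iter (U_(i)%MM j) (Y (f j)) w) v r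
    = if i \in r then Y (f i) v else v.
  by rewrite /monact foldr_mnm1 ?enum_uniq // mem_enum.
elim: r => [|j r IH] //= /andP [jr ur]; rewrite IH // mnm1E in_cons.
by case: eqP => [ij|_] //=; subst j; rewrite (negbTE jr).
Qed.

Lemma polyact_supp n (f : 'I_n -> Lam) (q : {mpoly k[n]}) v (s : seq 'X_{1..n}) :
  uniq s -> {subset msupp q <= s} ->
  polyact Y f q v = \sum_(mo <- s) q@_mo *: monact Y f mo v.
Proof.
move=> us sub; rewrite /polyact [RHS](bigID (fun mo => mo \in msupp q)) /=.
rewrite [X in _ = _ + X]big1 ?addr0; last first.
  by move=> mo; rewrite -mcoeff_eq0 => /eqP ->; rewrite scale0r.
rewrite -[RHS]big_filter; apply: perm_big; apply: uniq_perm.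
- exact: msupp_uniq.
- exact: filter_uniq.
- by move=> mo; rewrite mem_filter; case: (boolP (mo \in msupp q)) => // /sub ->.
Qed.

Lemma polyactX n (f : 'I_n -> Lam) (i : 'I_n) v :
  polyact Y f ('X_i : {mpoly k[n]}) v = Y (f i) v.
Proof. by rewrite /polyact msuppX big_seq1 mcoeffX eqxx scale1r monact_mnm1. Qed.

Lemma mnm1_inj n : injective (fun i : 'I_n => U_(i)%MM).
Proof.
move=> i j /(congr1 (fun m : 'X_{1..n} => m j)); rewrite !mnm1E eqxx.
by move/eqP; rewrite eqb1 => /eqP.
Qed.

Lemma mcoeff_linear_form n (c : 'I_n -> k) (mo : 'X_{1..n}) :
  (\sum_i c i *: ('X_i : {mpoly k[n]}))@_mo = \sum_i c i * (U_(i)%MM == mo)%:R.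
Proof. by rewrite raddf_sum; apply: eq_bigr => i _; rewrite /= mcoeffZ mcoeffX. Qed.

Lemma mcoeff_linear_form_mnm1 n (c : 'I_n -> k) j :
  (\sum_i c i *: ('X_i : {mpoly k[n]}))@_U_(j) = c j.
Proof.
rewrite mcoeff_linear_form (bigD1 j) //= eqxx mulr1 big1 ?addr0 // => i ij.
by rewrite (inj_eq (@mnm1_inj n)) (negbTE ij) mulr0.
Qed.

Lemma polyact_linear_form n (f : 'I_n -> Lam) (c : 'I_n -> k) v :
  polyact Y f (\sum_i c i *: ('X_i : {mpoly k[n]})) v = \sum_i c i *: Y (f i) v.
Proof.
rewrite (@polyact_supp _ _ _ _ [seq U_(i)%MM | i <- enum 'I_n]).
- rewrite big_map big_enum /=; apply: eq_bigr => i _.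
  by rewrite mcoeff_linear_form_mnm1 monact_mnm1.
- by rewrite map_inj_uniq ?enum_uniq //; exact: mnm1_inj.
- move=> mo; rewrite mcoeff_msupp mcoeff_linear_form; apply: contraR => hn.
  rewrite big1 // => i _; case: eqP => [e|_]; last by rewrite mulr0.
  by move: hn; rewrite -e map_f // mem_enum.
Qed.

Variables (W : lmodType k) (Z : Lam -> W -> W) (g : V -> W).
Hypothesis g_lin : forall (c : k) v w, g (c *: v + w) = c *: g v + g w.
Hypothesis g_comm : forall al v, g (Y al v) = Z al (g v).

Lemma polyact_morph n (f : 'I_n -> Lam) q v :
  g (polyact Y f q v) = polyact Z f q (g v).
Proof.
rewrite /polyact (lin_sum g_lin); apply: eq_bigr => mo _; rewrite (linZ g_lin).
congr (_ *: _); rewrite /monact; elim: (enum 'I_n) => [|j r IH] //=.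
by elim: (mo j) => [|t IHt] //=; rewrite g_comm IHt.
Qed.
End PolyAction.

Section UAlgebra.
Variables (k : fieldType) (A : lmodType k) (br : A -> A -> A).
Variables (Lam : eqType) (z : Lam -> A).
Hypothesis hU : U_algebra br z.

Let hL : is_lie_algebra br. Proof. by case: hU. Qed.

Lemma Fit_abelian a b : Fit br a -> Fit br b -> br a b = 0.
Proof. by case: hU => _ _ hab _ _; exact: hab. Qed.

Lemma Fit_span a : exists (s : seq Lam) (c : Lam -> k),
  Fit br (a - \sum_(al <- s) c al *: z al).
Proof. by case: hU => _ _ _ []. Qed.

Lemma Fit_annihilator_coef n (f : 'I_n -> Lam) (d : 'I_n -> k) b :
  injective f -> Fit br b -> b != 0 ->
  br b (\sum_i d i *: z (f i)) = 0 -> forall i, d i = 0.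
Proof.
case: hU => _ _ _ _ hTF injf Fb nzb hbd i.
have [q0 | nzq] := eqVneq (\sum_i d i *: ('X_i : {mpoly k[n]})) 0.
  by rewrite -(mcoeff_linear_form_mnm1 d) q0 mcoeff0.
suff b0 : b = 0 by rewrite b0 eqxx in nzb.
apply: (hTF _ _ injf _ nzq _ Fb).
rewrite polyact_linear_form -[RHS]hbd br_sumr //.
by apply: eq_bigr => j _; rewrite brZr.
Qed.

Lemma Fit_self_centralizing a : (forall b, Fit br b -> br a b = 0) -> Fit br a.
Proof.
move=> cent_a.
case: (classic (exists2 b, Fit br b & b <> 0)) => [[b Fb nzb] | noFit]; last first.
  have hM : metabelian br by case: hU.
  apply: (Fit_trivial_full hL hM) => b Fb.
  by apply: NNPP => nzb; apply: noFit; exists b.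
have [s [c Fav]] := Fit_span a.
have [n [f [d [injf Esum]]]] := sum_seq_inj_ord s c z.
rewrite {}Esum in Fav; set v := \sum_i d i *: z (f i) in Fav.
have cent_v b' : Fit br b' -> br v b' = 0.
  move=> Fb'; have -> : v = a - (a - v) by rewrite opprB addrC subrK.
  by rewrite brBl // cent_a // Fit_abelian // subr0.
have d0 : forall i, d i = 0.
  apply: Fit_annihilator_coef injf (Fb) (introN eqP nzb) _.
  by rewrite (br_anticomm hL) -/v cent_v ?oppr0.
by rewrite (_ : v = 0) ?subr0 // in Fav; rewrite /v big1 // => i _; rewrite d0 scale0r.
Qed.
End UAlgebra.

Section Extension.
Variables (k : fieldType) (A : lmodType k) (br : A -> A -> A).
Variables (Lam : eqType) (z : Lam -> A) (M : lmodType k) (X : Lam -> M -> M).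
Variable rho : A -> M -> M.
Hypothesis hL : is_lie_algebra br.
Hypothesis hrho : ext_action br z X rho.

Let rho_linl m : forall (c : k) a a', rho (c *: a + a') m = c *: rho a m + rho a' m.
Proof. by case: hrho => hl _ _ _ c a a'; exact: hl. Qed.

Lemma rho0r a : rho a 0 = 0.
Proof. by case: hrho => _ hr _ _; exact: (lin0 (f := rho a) (fun c => hr c a)). Qed.

Lemma rho_Fit b m : Fit br b -> rho b m = 0.
Proof. by case: hrho => _ _ _; apply. Qed.

Lemma rho_span (s : seq Lam) (c : Lam -> k) m :
  rho (\sum_(al <- s) c al *: z al) m = \sum_(al <- s) c al *: X al m.
Proof.
case: hrho => _ _ hz _; rewrite (lin_sum (f := fun a => rho a m) (rho_linl m)).
by apply: eq_bigr => al _; rewrite (linZ (f := fun a => rho a m) (rho_linl m)) hz.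
Qed.

Lemma rho_mod_Fit a a' m : Fit br (a - a') -> rho a m = rho a' m.
Proof.
by move=> Fa; rewrite -(subrK a' a) (linD (f := fun a => rho a m) (rho_linl m)) rho_Fit // add0r.
Qed.

Section HomAFacts.
Variable phi : A * M -> A.
Hypothesis hphi : HomA br rho phi.

Lemma HomA_split a m : phi (a, m) = a + phi (0, m).
Proof.
case: hphi => hlin _ hid.
by have := hlin 1 a 0 0 m; rewrite !scale1r addr0 add0r hid.
Qed.

Lemma HomA_restrict_lin (c : k) m m' :
  phi (0, c *: m + m') = c *: phi (0, m) + phi (0, m').
Proof. by case: hphi => hlin _ _; have := hlin c 0 0 m m'; rewrite scaler0 addr0. Qed.

Lemma HomA_restrict_rho a m : phi (0, rho a m) = br (phi (0, m)) a.
Proof.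
case: hphi => _ hbr hid; have := hbr (0, m) (a, 0).
by rewrite /ext_br /= br0l // rho0r subr0 hid.
Qed.

Hypothesis hU : U_algebra br z.

Lemma HomA_restrict_Fit m : Fit br (phi (0, m)).
Proof.
apply: (Fit_self_centralizing hU) => b Fb.
case: hphi => _ _ hid.
by rewrite -HomA_restrict_rho rho_Fit.
Qed.

Lemma HomA_restrict_HomR : HomR_M_Fit br z X (fun m => phi (0, m)).
Proof.
split; first exact: HomA_restrict_Fit.
split; first exact: HomA_restrict_lin.
apply: (polyact_morph HomA_restrict_lin) => al m.
by case: hrho => _ _ hz _; rewrite -hz HomA_restrict_rho.
Qed.
End HomAFacts.

Lemma HomA_eq_restrict phi1 phi2 :
  HomA br rho phi1 -> HomA br rho phi2 ->
  (forall m, phi1 (0, m) = phi2 (0, m)) -> forall p, phi1 p = phi2 p.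
Proof. by move=> h1 h2 e [a m]; rewrite (HomA_split h1) (HomA_split h2) e. Qed.

Hypothesis hU : U_algebra br z.

Section HomRFacts.
Variable psi : M -> A.
Hypothesis hpsi : HomR_M_Fit br z X psi.

Let psi_lin : forall (c : k) m m', psi (c *: m + m') = c *: psi m + psi m'.
Proof. by case: hpsi => _ []. Qed.

Lemma HomR_X al m : psi (X al m) = br (psi m) (z al).
Proof.
case: hpsi => _ [_ hpoly].
by have := hpoly 1%N (fun _ => al) 'X_ord0 m; rewrite !polyactX.
Qed.

Lemma HomR_rho a m : psi (rho a m) = br (psi m) a.
Proof.
have [s [c Fa]] := Fit_span hU a.
rewrite (rho_mod_Fit _ Fa) -(subrK (\sum_(al <- s) c al *: z al) a) brDr //.
case: hpsi => Fpsi _.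
rewrite (Fit_abelian hU (Fpsi m) Fa) add0r rho_span (lin_sum psi_lin) br_sumr //.
by apply: eq_bigr => al _; rewrite (linZ psi_lin) HomR_X brZr.
Qed.

Lemma HomR_extend_HomA : HomA br rho (fun p => p.1 + psi p.2).
Proof.
case: hpsi => Fpsi _.
split=> [c a a' m m' | [a m] [a' m'] | a] /=.
- by rewrite psi_lin scalerDr addrACA.
- rewrite (linB psi_lin) !HomR_rho (brDl hL) !(brDr hL).
  rewrite (Fit_abelian hU (Fpsi m) (Fpsi m')).
  by rewrite addr0 (br_anticomm hL a (psi m')) [RHS]addrAC -addrA.
- by rewrite (lin0 psi_lin) addr0.
Qed.
End HomRFacts.
End Extension.

Theorem lemma4p3p7 (k : fieldType) (A : lmodType k) (br : A -> A -> A)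
    (Lam : eqType) (z : Lam -> A) (M : lmodType k) (X : Lam -> M -> M)
    (rho : A -> M -> M) :
  U_algebra br z ->
  R_module_str X -> R_torsion_free X ->
  ext_action br z X rho ->
  (forall phi : A * M -> A, HomA br rho phi ->
     HomR_M_Fit br z X (fun m => phi (0, m))) /\
  (forall phi1 phi2 : A * M -> A, HomA br rho phi1 -> HomA br rho phi2 ->
     (forall m, phi1 (0, m) = phi2 (0, m)) -> forall p, phi1 p = phi2 p) /\
  (forall psi : M -> A, HomR_M_Fit br z X psi ->
     exists2 phi : A * M -> A, HomA br rho phi & forall m, phi (0, m) = psi m).
Proof.
move=> hU _ _ hrho; have hL : is_lie_algebra br by case: hU.
split; first by move=> phi hphi; exact: (HomA_restrict_HomR hL hrho hphi hU).
split; first exact: HomA_eq_restrict.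
move=> psi hpsi; exists (fun p => p.1 + psi p.2).
  exact: (HomR_extend_HomA hL hrho hU hpsi).
by move=> m; rewrite add0r.
Qed.
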